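(* Let $A$ be a real Baer von Neumann regular poring, let $\mathfrak{p}\in\mathrm{Spec}\,A$ and let $B=\prod_{\mathfrak{q}\in\mathrm{Spec}\,A}K_\mathfrak{q}$ be an epof of $A$. Let $e\in B$ be the idempotent with $e(\mathfrak{q})=1$ for $\mathfrak{q}\neq\mathfrak{p}$ and $e(\mathfrak{p})=0$. Then $\mathfrak{p}$ is an isolated point of $\mathrm{Spec}\,A$ if and only if there is an ideal $I$ of $B$ with $I\subset eB$ such that $B/I$ is an essential extension of $A$ (via $A\to B\to B/I$).
   Context: All rings are commutative and unitary. A poring is a ring $A$ with a partial ordering $A^+$ (closed under addition and multiplication, containing all squares). A ring is real if $\sum a_i^2=0$ implies all $a_i=0$; von Neumann regular if every $a$ has $b$ with $a=a^2b$; Baer if the annihilator of every subset is generated by an idempotent. An epof of $A$ is the poring $B=\prod_{\mathfrak{q}\in\mathrm{Spec}\,A}K_\mathfrak{q}$ with $B^+=B^2$, each $K_\mathfrak{q}$ a real closed field algebraic over $\mathrm{qf}(A/\mathfrak{q})$ with $A^+/\mathfrak{q}\subset K_\mathfrak{q}^2$, $A$ embedded diagonally; $b(\mathfrak{q})$ denotes the $\mathfrak{q}$-component of $b\in B$. $A\to D$ is an essential extension if it is injective and every nonzero ideal of $D$ meets the image of $A$ nontrivially. A point is isolated if its singleton is clopen. *)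

From HB Require Import structures.
From mathcomp Require Import all_boot all_order all_algebra.
From mathcomp Require Import all_field.
From mathcomp.real_closed Require Import polyrcf.
Set Implicit Arguments. Unset Strict Implicit. Unset Printing Implicit Defensive.
Import Order.TTheory GRing.Theory Num.Theory.
Local Open Scope ring_scope.

Definition is_ideal (R : comPzRingType) (I : R -> Prop) : Prop :=
  [/\ I 0, (forall x y, I x -> I y -> I (x + y)) & (forall r x, I x -> I (r * x))].

Definition prime_ideal (R : comPzRingType) (P : R -> Prop) : Prop :=
  [/\ is_ideal P, ~ P 1 & (forall x y, P (x * y) -> P x \/ P y)].

Definition Spec (R : comPzRingType) := { P : R -> Prop | prime_ideal P }.

Definition zariski_closed (R : comPzRingType) (U : Spec R -> Prop) : Prop :=
  exists S : R -> Prop, forall q : Spec R, U q <-> (forall s, S s -> proj1_sig q s).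
Definition zariski_open (R : comPzRingType) (U : Spec R -> Prop) : Prop :=
  exists S : R -> Prop, forall q : Spec R, U q <-> ~ (forall s, S s -> proj1_sig q s).

Definition isolated_point (R : comPzRingType) (p : Spec R) : Prop :=
  zariski_open (fun q => q = p) /\ zariski_closed (fun q => q = p).

Definition real_ring (R : comPzRingType) : Prop :=
  forall (n : nat) (a : 'I_n -> R), \sum_(i < n) a i ^+ 2 = 0 -> forall i, a i = 0.

Definition vN_regular (R : comPzRingType) : Prop :=
  forall a : R, exists b, a = a ^+ 2 * b.

Definition annihilator (R : comPzRingType) (S : R -> Prop) : R -> Prop :=
  fun x => forall s, S s -> x * s = 0.

Definition baer_ring (R : comPzRingType) : Prop :=
  forall S : R -> Prop, exists e : R,
    e * e = e /\ forall x, annihilator S x <-> exists y, x = e * y.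

(* a poring structure: a partial ordering (positive cone) A^+ *)
Definition poring_cone (R : comPzRingType) (Apos : R -> Prop) : Prop :=
  [/\ (forall x y, Apos x -> Apos y -> Apos (x + y)),
      (forall x y, Apos x -> Apos y -> Apos (x * y)),
      (forall x, Apos (x ^+ 2)) &
      (forall x, Apos x -> Apos (- x) -> x = 0)].

(* Data of an epof: for each prime q a real closed field K q together with an
   embedding phi q : A/q -> K q, given as a ring morphism A -> K q with kernel q. *)
Definition is_epof (R : comPzRingType) (Apos : R -> Prop)
  (K : Spec R -> rcfType) (phi : forall q : Spec R, {rmorphism R -> K q}) : Prop :=
  forall q : Spec R,
    [/\ (forall a, phi q a = 0 <-> proj1_sig q a),
        (* K q is algebraic over qf(A/q) (= the fraction field of phi q (A)) *)
        (forall x : K q, exists p : {poly K q},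
            [/\ p != 0, (forall i, exists a, p`_i = phi q a) & root p x]) &
        (forall a, Apos a -> exists y : K q, phi q a = y ^+ 2)].

Definition epB (R : comPzRingType) (K : Spec R -> rcfType) := forall q : Spec R, K q.

Definition epB_add R (K : Spec R -> rcfType) (x y : @epB R K) : epB K := fun q => x q + y q.
Definition epB_mul R (K : Spec R -> rcfType) (x y : @epB R K) : epB K := fun q => x q * y q.
Definition epB_zero R (K : Spec R -> rcfType) : @epB R K := fun q => 0.
Definition epB_one R (K : Spec R -> rcfType) : @epB R K := fun q => 1.

Definition diag R (K : Spec R -> rcfType) (phi : forall q : Spec R, {rmorphism R -> K q}) (a : R) : @epB R K :=
  fun q => phi q a.

Definition is_ideal_B R (K : Spec R -> rcfType) (I : @epB R K -> Prop) : Prop :=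
  [/\ I (epB_zero K), (forall x y, I x -> I y -> I (epB_add x y))
    & (forall r x, I x -> I (epB_mul r x))].

(* D together with pi : B -> D is (a model of) the quotient ring B/I *)
Definition quotient_of R (K : Spec R -> rcfType) (I : @epB R K -> Prop) (D : comPzRingType) (pi : epB K -> D) : Prop :=
  [/\ (forall x y, pi (epB_add x y) = pi x + pi y),
      (forall x y, pi (epB_mul x y) = pi x * pi y),
      pi (epB_one K) = 1,
      (forall d, exists x, pi x = d) &
      (forall x, pi x = 0 <-> I x)].

Definition essential_ext (R D : comPzRingType) (f : R -> D) : Prop :=
  injective f /\
  forall J : D -> Prop, is_ideal J -> (exists d, J d /\ d <> 0) ->
    exists a, J (f a) /\ f a <> 0.

(* In a von Neumann regular ring every principal ideal is generated by an
   idempotent and every prime ideal is maximal.  Hence p is isolated iff some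
   idempotent g lies in every prime except p, and then diag g = 1 - e.

   If I <= eB and B/I is essential over A, the ideal of B/I generated by 1 - e
   contains the image of some a in A; multiplying by e puts e * diag a in I.
   For the idempotent g with gA = aA this forces gA and p to meet only in 0,
   so for q <> p and k in p \ q we get gk = 0, hence g in q.

   Conversely, take I maximal (Zorn) among ideals of B contained in eB that
   meet diag A only in 0.  A nonzero ideal of B/I either has a preimage with an
   element nonzero at p, and then contains the image of g, or its preimage lies
   in eB and by maximality meets diag A outside I. *)

From HB Require Import structures.
From mathcomp Require Import all_boot all_order all_algebra.
From mathcomp.real_closed Require Import polyrcf.
From mathcomp Require Import generic_quotient ring_quotient.
From mathcomp Require Import boolp classical_sets.
From mathcomp Require Import ring.
Import GRing.Theory.
Local Open Scope classical_set_scope.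
Local Open Scope ring_scope.

Section Ideals.
Context {R : comPzRingType}.
Implicit Types (I M J : set R) (q : Spec R) (x y g : R).

Lemma is_ideal0 : is_ideal [set 0 : R].
Proof. by split=> // [_ _ -> ->|r _ ->]; rewrite ?addr0 ?mulr0. Qed.

Lemma is_ideal_bigcup_chain (F : set (set R)) :
  F !=set0 -> total_on F subset -> (forall X, F X -> is_ideal X) ->
  is_ideal (\bigcup_(X in F) X).
Proof.
move=> [X0 FX0] Ftot Fid; split.
- by exists X0 => //; case: (Fid X0 FX0).
- move=> x y [X FX Xx] [Y FY Yy].
  have [XY|YX] := Ftot X Y FX FY.
  + by exists Y => //; case: (Fid Y FY) => _ YD _; apply: YD => //; apply: XY.
  + by exists X => //; case: (Fid X FX) => _ XD _; apply: XD => //; apply: YX.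
- by move=> r x [X FX Xx]; exists X => //; case: (Fid X FX) => _ _; apply.
Qed.

Definition principal_ideal (c : R) : set R := [set c * z | z in [set: R]].

Lemma is_ideal_principal c : is_ideal (principal_ideal c).
Proof.
split; first by exists 0 => //; rewrite mulr0.
- by move=> _ _ [u _ <-] [v _ <-]; exists (u + v) => //; rewrite mulrDr.
- by move=> r _ [u _ <-]; exists (r * u) => //; rewrite mulrCA.
Qed.

Definition ideal_adjoin I x : set R := [set m + x * r | m in I & r in [set: R]].

Lemma is_ideal_adjoin {I} x : is_ideal I -> is_ideal (ideal_adjoin I x).
Proof.
case=> I0 ID IM; split; first by exists 0 => //; exists 0; rewrite ?mulr0 ?addr0.
- move=> _ _ [m1 Im1 [r1 _ <-]] [m2 Im2 [r2 _ <-]].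
  by exists (m1 + m2); [exact: ID | exists (r1 + r2) => //; ring].
- move=> r _ [m Im [s _ <-]].
  by exists (r * m); [exact: IM | exists (r * s) => //; ring].
Qed.

Lemma sub_ideal_adjoin {I} x : is_ideal I -> I `<=` ideal_adjoin I x.
Proof. by case=> I0 _ _ m Im; exists m => //; exists 0; rewrite ?mulr0 ?addr0. Qed.

Lemma mem_ideal_adjoin {I} x : is_ideal I -> ideal_adjoin I x x.
Proof. by case=> I0 _ _; exists 0 => //; exists 1; rewrite ?mulr1 ?add0r. Qed.

Lemma maximal_ideal_exists (Q : set R -> Prop) :
  Q [set 0] ->
  (forall F : set (set R), F !=set0 -> total_on F subset ->
     (forall X, F X -> is_ideal X /\ Q X) -> Q (\bigcup_(X in F) X)) ->
  exists M, [/\ is_ideal M, Q M &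
    forall J, is_ideal J -> Q J -> M `<=` J -> J `<=` M].
Proof.
move=> Q0 Qchain.
(* [Zorn_bigcup] also sees the empty chain, whose union is [set0]. *)
pose P X := X = set0 \/ is_ideal X /\ Q X.
have [M [PM Mmax]] : exists M, P M /\ forall B, M `<` B -> ~ P B.
  apply: Zorn_bigcup => F FP Ftot.
  have [->|/set0P [x [X FX Xx]]] := eqVneq (\bigcup_(X in F) X) set0; first by left.
  pose G := [set X | F X /\ X !=set0].
  have GF : \bigcup_(X in G) X = \bigcup_(X in F) X.
    apply/seteqP; split=> y [Y GY Yy]; first by exists Y => //; case: GY.
    by exists Y => //; split => //; exists y.
  have GP Y : G Y -> is_ideal Y /\ Q Y by case=> /FP [->|//] [z []].
  have G0 : G !=set0 by exists X; split => //; exists x.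
  have Gtot : total_on G subset by move=> Y Z [FY _] [FZ _]; exact: Ftot.
  right; rewrite -GF; split; last exact: Qchain.
  by apply: is_ideal_bigcup_chain => // Y /GP [].
have {PM} [idM QM] : is_ideal M /\ Q M.
  case: PM => // M0; exfalso; apply: (Mmax [set 0]).
    by rewrite M0; split=> // /(_ 0 erefl).
  by right; split => //; exact: is_ideal0.
exists M; split => // J idJ QJ MJ x Jx; apply: contrapT => Mx.
by apply: (Mmax J); [split => // /(_ x Jx) | right].
Qed.

Lemma prime_maximal_avoiding_idempotent {M g} : g * g = g -> is_ideal M -> ~ M g ->
  (forall J, is_ideal J -> ~ J g -> M `<=` J -> J `<=` M) -> prime_ideal M.
Proof.
move=> gg idM Mg Mmax; have [_ MD MM] := idM.
split => // [M1|x y Mxy]; first by apply: Mg; rewrite -(mulr1 g); exact: MM.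
have adjoin_g z : ~ M z -> ideal_adjoin M z g.
  move=> Mz; apply: contrapT => Jg; apply: Mz.
  apply: (Mmax _ (is_ideal_adjoin z idM) Jg (sub_ideal_adjoin z idM)).
  exact: mem_ideal_adjoin.
apply: contrapT => /not_orP [/adjoin_g [m1 Mm1 [r1 _ E1]] /adjoin_g [m2 Mm2 [r2 _ E2]]].
(* g lies in M + xA and in M + yA, so g = g * g lies in M + xyA = M. *)
apply: Mg; rewrite -gg -{1}E1 -E2.
have -> : (m1 + x * r1) * (m2 + y * r2) =
   m1 * (m2 + y * r2) + (m2 * (x * r1) + (x * y) * (r1 * r2)) by ring.
by apply: (MD); [|apply: (MD)]; rewrite mulrC; apply: (MM).
Qed.

Lemma prime0 q : sval q 0. Proof. by case: q => P /= [[]]. Qed.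
Lemma prime1 q : ~ sval q 1. Proof. by case: q => P /= []. Qed.
Lemma primeD q x y : sval q x -> sval q y -> sval q (x + y).
Proof. by case: q => P /= [[_ PD _] _ _]; exact: PD. Qed.
Lemma primeMl q r x : sval q x -> sval q (r * x).
Proof. by case: q => P /= [[_ _ PM] _ _]; exact: PM. Qed.
Lemma primeMr q r x : sval q x -> sval q (x * r).
Proof. by rewrite mulrC; exact: primeMl. Qed.
Lemma primeM q x y : sval q (x * y) -> sval q x \/ sval q y.
Proof. by case: q => P /= [_ _ PM]; exact: PM. Qed.

Lemma prime_idempotent q {g} : g * g = g -> sval q g \/ sval q (1 - g).
Proof. by move=> gg; apply: primeM; rewrite mulrBr mulr1 gg subrr; exact: prime0. Qed.

Lemma spec_eq p q : (forall x, sval p x <-> sval q x) -> p = q.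
Proof.
case: p q => P HP [Q HQ] /= PQ; apply: eq_exist.
by apply: funext => x; apply: propext.
Qed.

Lemma isolated_point_idempotent {p g} : g * g = g -> ~ sval p g ->
  (forall q, q <> p -> sval q g) -> isolated_point p.
Proof.
move=> gg pg Vg; split.
- exists [set g] => q; split; first by move=> -> /(_ g erefl).
  by move=> qg; apply: contrapT => /Vg ?; apply: qg => _ ->.
- exists [set 1 - g] => q; split; first by move=> -> _ ->; case: (prime_idempotent p gg).
  move=> q1g; apply: contrapT => /Vg qg; apply: (prime1 q).
  by rewrite -(subrK g 1); apply: primeD => //; exact: q1g.
Qed.

End Ideals.

Section RegularRings.
Context {R : comPzRingType} (regR : vN_regular R).
Implicit Types (p q : Spec R) (x : R).

Lemma regular_idempotent x : exists g, [/\ g * g = g, x * g = x & exists b, g = x * b].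
Proof.
have [b xE] := regR x; exists (x * b); split; last by exists b.
- by rewrite mulrACA -expr2 mulrA -xE.
- by rewrite mulrA -expr2 -xE.
Qed.

Lemma regular_prime_maximal {p q} : (forall x, sval p x -> sval q x) -> p = q.
Proof.
move=> pq; apply: spec_eq => x; split=> [|qx]; first exact: pq.
apply: contrapT => px; have [g [gg xg [b gE]]] := regular_idempotent x.
have pg : ~ sval p g by move=> pg; apply: px; rewrite -xg; exact: primeMl.
have p1g : sval p (1 - g) by case: (prime_idempotent p gg).
apply: (prime1 q); rewrite -(subrK g 1); apply: primeD; first exact: pq.
by rewrite gE; exact: primeMr.
Qed.

Lemma regular_prime_separate {p q} : q <> p -> exists k, sval p k /\ ~ sval q k.
Proof.
move=> qp; apply: contrapT => nk; apply: qp; symmetry; apply: regular_prime_maximal => k pk.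
by apply: contrapT => qk; apply: nk; exists k.
Qed.

Lemma regular_in_all_primes x : (forall q, sval q x) -> x = 0.
Proof.
move=> allx; apply: contrapT => x0.
have [g [gg xg [b gE]]] := regular_idempotent x.
have g0 : g <> 0 by move=> g0; apply: x0; rewrite -xg g0 mulr0.
have [|M [idM Mg Mmax]] := @maximal_ideal_exists R (fun J => ~ J g) g0.
  by move=> F _ _ FQ [X FX Xg]; exact: (FQ X FX).2 Xg.
have Mprime := prime_maximal_avoiding_idempotent gg idM Mg Mmax.
have /= Mx := allx (exist _ M Mprime).
by apply: Mg; case: idM => _ _ MM; rewrite gE mulrC; exact: MM.
Qed.

Lemma regular_isolated_idempotent p : isolated_point p ->
  exists g, [/\ g * g = g, ~ sval p g & forall q, q <> p -> sval q g].
Proof.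
case=> [[S openS] _].
have [s [Ss ps]] : exists s, S s /\ ~ sval p s.
  apply: contrapT => ns; apply: ((openS p).1 erefl) => s Ss.
  by apply: contrapT => ps; apply: ns; exists s.
have [g [gg sg [b gE]]] := regular_idempotent s.
exists g; split => // [pg|q qp].
  by apply: ps; rewrite -sg; exact: primeMl.
rewrite gE; apply: primeMr; apply: contrapT => qs; apply: qp; apply/(openS q) => allS.
by apply: qs; exact: allS.
Qed.

End RegularRings.

Section QuotientRing.
Context {R : comPzRingType} {I : set R} (idI : is_ideal I) (I1 : ~ I 1).

(* [ring_quotient] only quotients nontrivial rings; a proper ideal shows R is one. *)
Definition proper_quotient_carrier : Type := R.
HB.instance Definition _ := GRing.ComPzRing.copy proper_quotient_carrier R.

Lemma proper_quotient_oner_neq0 : (1 : proper_quotient_carrier) != 0.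
Proof. by apply/eqP => e10; apply: I1; rewrite e10; case: idI. Qed.
HB.instance Definition _ :=
  GRing.PzSemiRing_isNonZero.Build proper_quotient_carrier proper_quotient_oner_neq0.

Definition ideal_pred : {pred proper_quotient_carrier} := fun x => `[< I x >].

Lemma ideal_pred_closed : idealr_closed ideal_pred.
Proof.
case: idI => I0 ID IM; split; [exact/asboolP | by apply/negP => /asboolP |].
by move=> a u v /asboolP Iu /asboolP Iv; apply/asboolP; apply: ID => //; exact: IM.
Qed.
HB.instance Definition _ := isIdealr.Build proper_quotient_carrier ideal_pred ideal_pred_closed.

Lemma quotient_ring_exists : exists (D : comPzRingType) (pi : R -> D),
  [/\ {morph pi : x y / x + y}, {morph pi : x y / x * y}, pi 1 = 1,
      (forall d, exists x, pi x = d) & (forall x, pi x = 0 <-> I x)].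
Proof.
pose pi := \pi_({ideal_quot ideal_pred})%qT.
exists {ideal_quot ideal_pred}, pi.
split; [exact: (rmorphD pi) | exact: (rmorphM pi) | exact: (rmorph1 pi) |
        by move=> d; exists (repr d); exact: reprK |].
move=> x; have kerE : (pi x == pi 0) = `[< I x >].
  by rewrite -Quotient.idealrBE subr0.
rewrite -(rmorph0 pi); split => [/eqP|Ix]; first by rewrite kerE => /asboolP.
by apply/eqP; rewrite kerE; exact/asboolP.
Qed.

End QuotientRing.

Section EpofRing.
Context {A : comPzRingType} (K : Spec A -> rcfType).

Definition epB_ring : Type := epB K.
HB.instance Definition _ := gen_eqMixin epB_ring.
HB.instance Definition _ := gen_choiceMixin epB_ring.

Definition epB_opp (x : epB K) : epB K := fun q => - x q.

Local Ltac pointwise := move=> *; apply: functional_extensionality_dep => q.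
Lemma epB_addA : associative (@epB_add A K). Proof. pointwise; exact: addrA. Qed.
Lemma epB_addC : commutative (@epB_add A K). Proof. pointwise; exact: addrC. Qed.
Lemma epB_add0 : left_id (epB_zero K) (@epB_add A K). Proof. pointwise; exact: add0r. Qed.
Lemma epB_addN : left_inverse (epB_zero K) epB_opp (@epB_add A K).
Proof. pointwise; exact: addNr. Qed.
HB.instance Definition _ :=
  GRing.isZmodule.Build epB_ring epB_addA epB_addC epB_add0 epB_addN.
Lemma epB_mulA : associative (@epB_mul A K). Proof. pointwise; exact: mulrA. Qed.
Lemma epB_mulC : commutative (@epB_mul A K). Proof. pointwise; exact: mulrC. Qed.
Lemma epB_mul1 : left_id (epB_one K) (@epB_mul A K). Proof. pointwise; exact: mul1r. Qed.
Lemma epB_mulD : left_distributive (@epB_mul A K) (@epB_add A K).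
Proof. pointwise; exact: mulrDl. Qed.
HB.instance Definition _ :=
  GRing.Zmodule_isComPzRing.Build epB_ring epB_mulA epB_mulC epB_mul1 epB_mulD.

Lemma epB_ext (x y : epB_ring) : (forall q, x q = y q) -> x = y.
Proof. exact: functional_extensionality_dep. Qed.

Section Evaluation.
Variables (x y : epB_ring) (q : Spec A).
Lemma epB_mulE : (x * y) q = x q * y q. Proof. by []. Qed.
Lemma epB_addE : (x + y) q = x q + y q. Proof. by []. Qed.
Lemma epB_subE : (x - y) q = x q - y q. Proof. by []. Qed.
Lemma epB_1E : (1 : epB_ring) q = 1. Proof. by []. Qed.
Lemma epB_0E : (0 : epB_ring) q = 0. Proof. by []. Qed.
End Evaluation.

Definition epBE := (epB_mulE, epB_subE, epB_addE, epB_1E, epB_0E).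

Lemma epB_quotient_exists (I : set epB_ring) : is_ideal_B I -> ~ I (epB_one K) ->
  exists (D : comPzRingType) (pi : epB K -> D), quotient_of I pi.
Proof.
move=> idI I1; have [D [pi [piD piM pi1 surj ker]]] := @quotient_ring_exists epB_ring I idI I1.
by exists D, pi; split.
Qed.

End EpofRing.

Section QuotientOf.
Context {A : comPzRingType} {K : Spec A -> rcfType} {I : set (epB_ring K)}
  {D : comPzRingType} {f : epB_ring K -> D} (fI : quotient_of I f).

Lemma quotient_ofD x y : f (x + y) = f x + f y. Proof. by case: fI => + _ _ _ _; apply. Qed.
Lemma quotient_ofM x y : f (x * y) = f x * f y. Proof. by case: fI => _ + _ _ _; apply. Qed.
Lemma quotient_of_surj d : exists x, f x = d. Proof. by case: fI => _ _ _ + _; apply. Qed.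
Lemma quotient_of_ker x : f x = 0 <-> I x. Proof. by case: fI => _ _ _ _; apply. Qed.

Lemma quotient_of0 : f 0 = 0.
Proof. by apply: (addrI (f 0)); rewrite -quotient_ofD !addr0. Qed.

Lemma quotient_of_eq x y : f x = f y -> I (x - y).
Proof.
move=> xy; apply/quotient_of_ker; apply: (addIr (f y)).
by rewrite -quotient_ofD subrK xy add0r.
Qed.

End QuotientOf.

Section Epof.
Context {A : comPzRingType} {K : Spec A -> rcfType}
  {phi : forall q : Spec A, {rmorphism A -> K q}} {p : Spec A} {e : epB_ring K}.
Hypotheses (regA : vN_regular A) (kerphi : forall q a, phi q a = 0 <-> sval q a)
  (e1 : forall q, q <> p -> e q = 1) (e0 : e p = 0).

Local Notation diagR := (diag phi : A -> epB_ring K).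

Lemma diagM a b : diagR (a * b) = diagR a * diagR b.
Proof. by apply: epB_ext => q; rewrite /diag rmorphM. Qed.

Lemma diagB a b : diagR (a - b) = diagR a - diagR b.
Proof. by apply: epB_ext => q; rewrite /diag rmorphB. Qed.

Lemma diag0 : diagR 0 = 0.
Proof. by apply: epB_ext => q; rewrite /diag rmorph0. Qed.

Lemma diag_inj : injective diagR.
Proof.
move=> a b ab; apply/eqP; rewrite -subr_eq0; apply/eqP.
apply: (regular_in_all_primes regA) => q; apply/kerphi.
rewrite rmorphB; move: (congr1 (fun x : epB_ring K => x q) ab).
by rewrite /diag /= => ->; rewrite subrr.
Qed.

Lemma eB_mem (x : epB_ring K) : (exists y, x = epB_mul e y) <-> x p = 0.
Proof.
split=> [[y ->]|xp]; first by rewrite /epB_mul e0 mul0r.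
exists x; apply: epB_ext => q; rewrite /epB_mul.
by have [->|qp] := pselect (q = p); rewrite ?e0 ?xp ?mul0r // e1 // mul1r.
Qed.

Lemma mul_e_diag h : sval p h -> e * diagR h = diagR h.
Proof.
move=> ph; apply: epB_ext => q; rewrite epBE.
have [->|qp] := pselect (q = p); last by rewrite e1 // mul1r.
by rewrite e0 mul0r; symmetry; apply/kerphi.
Qed.

Lemma mul_e_1Be : e * (1 - e) = 0.
Proof.
apply: epB_ext => q; rewrite !epBE.
by have [->|qp] := pselect (q = p); rewrite ?e0 ?mul0r // e1 // subrr mulr0.
Qed.

Lemma diag_isolated_idempotent {g} : g * g = g -> ~ sval p g ->
  (forall q, q <> p -> sval q g) -> diagR g = 1 - e.
Proof.
move=> gg pg Vg; apply: epB_ext => q; rewrite !epBE /diag.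
have [->|qp] := pselect (q = p); last by rewrite e1 // subrr; apply/kerphi; exact: Vg.
have phig0 : phi p g != 0 by apply/eqP => /kerphi.
by rewrite e0 subr0; apply: (mulIf phig0); rewrite mul1r -rmorphM gg.
Qed.

Section EssentialToIsolated.
Context {I : set (epB_ring K)} {D : comPzRingType} (pi : epB_ring K -> D).
Hypotheses (idI : is_ideal_B I) (Ie : forall x, I x -> x p = 0) (piI : quotient_of I pi)
  (ess : essential_ext (fun a => pi (diagR a))).

Lemma essential_quotient_idempotent :
  exists g, [/\ g * g = g, pi (diagR g) <> 0 & I (e * diagR g)].
Proof.
case: ess => _ /(_ _ (is_ideal_principal (pi (1 - e)))) ess1e.
case: (idI : is_ideal (R := epB_ring K) I) => _ _ IM.
have pi1e : pi (1 - e) <> 0.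
  by move=> /(quotient_of_ker piI) /Ie; rewrite epBE e0 subr0; exact/eqP/oner_neq0.
have [|a [[z _ az] pia]] := ess1e.
  by exists (pi (1 - e)); split => //; exists 1 => //; rewrite mulr1.
have [y piy] := quotient_of_surj piI z.
have Iea : I (e * diagR a).
  have : I (diagR a - (1 - e) * y).
    by apply: (quotient_of_eq piI); rewrite (quotient_ofM piI) piy az.
  by move=> /(IM e); rewrite mulrBr mulrA mul_e_1Be mul0r subr0.
have [g [gg ag [b gE]]] := regular_idempotent regA a.
exists g; split => //.
  by move=> pig; apply: pia; rewrite -ag diagM (quotient_ofM piI) pig mulr0.
by rewrite gE diagM mulrA mulrC; apply: IM.
Qed.

Lemma isolated_of_essential_quotient : isolated_point p.
Proof.
have [g [gg pig Ieg]] := essential_quotient_idempotent.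
case: (idI : is_ideal (R := epB_ring K) I) => _ _ IM; case: ess => injd _.
have gp0 h : sval p h -> (exists c, h = g * c) -> h = 0.
  move=> ph [c hE]; apply: injd; rewrite /= diag0 (quotient_of0 piI).
  apply/(quotient_of_ker piI); rewrite -mul_e_diag // hE diagM mulrA mulrC.
  exact: IM.
apply: (isolated_point_idempotent gg) => [pg|q qp].
  have g0 : g = 0 by apply: gp0 => //; exists 1; rewrite mulr1.
  by apply: pig; rewrite g0 diag0 (quotient_of0 piI).
have [k [pk qk]] := regular_prime_separate regA qp.
have gk0 : g * k = 0 by apply: gp0; [exact: primeMl | exists k].
have : sval q (g * k) by rewrite gk0; exact: prime0.
by case/primeM.
Qed.

End EssentialToIsolated.

Definition eB_disjoint_diag (J : set (epB_ring K)) : Prop :=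
  (forall x, J x -> x p = 0) /\ (forall a, J (diagR a) -> a = 0).

Lemma maximal_eB_disjoint_diag : exists I, [/\ is_ideal I, eB_disjoint_diag I &
  forall J, is_ideal J -> eB_disjoint_diag J -> I `<=` J -> J `<=` I].
Proof.
apply: maximal_ideal_exists.
  by split=> [x ->|a /esym d0]; last apply: diag_inj; rewrite ?diag0.
move=> F _ _ FQ; split=> [x|a] [X FX Xx]; have [_ [XQ1 XQ2]] := FQ X FX.
  exact: XQ1.
exact: XQ2.
Qed.

Section MaximalToEssential.
Context {I : set (epB_ring K)} {D : comPzRingType} (pi : epB_ring K -> D) {f : A}.
Hypotheses (disjI : eB_disjoint_diag I)
  (maxI : forall J, is_ideal J -> eB_disjoint_diag J -> I `<=` J -> J `<=` I)
  (piI : quotient_of I pi) (diagf : diagR f = 1 - e).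

Lemma essential_of_maximal : essential_ext (fun a => pi (diagR a)).
Proof.
have [Ie Id] := disjI.
have inj : injective (fun a => pi (diagR a)).
  move=> a b /(quotient_of_eq piI); rewrite -diagB => /Id /eqP.
  by rewrite subr_eq0 => /eqP.
split => // J [J0 JD JM] [d [Jd d0]].
pose J' x := J (pi x).
have idJ' : is_ideal J'.
  split=> [|x y Jx Jy|r x Jx]; rewrite /J'.
  - by rewrite (quotient_of0 piI).
  - by rewrite (quotient_ofD piI); exact: JD.
  - by rewrite (quotient_ofM piI); exact: JM.
have [[x [J'x xp]]|J'e] := pselect (exists x, J' x /\ x p != 0).
  exists f; split; last first.
    rewrite diagf => /(quotient_of_ker piI) /Ie; rewrite epBE e0 subr0.
    exact/eqP/oner_neq0.
  have -> : diagR f = ((fun q => (1 - e q) / x q) : epB_ring K) * x.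
    apply: epB_ext => q; rewrite diagf !epBE.
    have [->|qp] := pselect (q = p); last by rewrite e1 // subrr !mul0r.
    by rewrite e0 subr0 mul1r mulVf.
  by rewrite (quotient_ofM piI); exact: JM.
apply: contrapT => noa.
have J'I : J' `<=` I.
  apply: maxI => //; last by move=> x /(quotient_of_ker piI); rewrite /J' => ->.
  split=> [x J'x|a J'a].
    by apply: contrapT => /eqP xp; apply: J'e; exists x.
  apply: inj; rewrite /= diag0 (quotient_of0 piI).
  by apply: contrapT => pia; apply: noa; exists a.
have [x0 x0d] := quotient_of_surj piI d.
by apply: d0; rewrite -x0d; apply/(quotient_of_ker piI)/J'I; rewrite /J' x0d.
Qed.

End MaximalToEssential.

Lemma essential_quotient_of_isolated : isolated_point p ->
  exists I, [/\ is_ideal_B I, (forall x, I x -> x p = 0) &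
    exists (D : comPzRingType) (pi : epB K -> D),
      quotient_of I pi /\ essential_ext (fun a => pi (diagR a))].
Proof.
move=> /(regular_isolated_idempotent regA) [f [ff pf Vf]].
have diagf := diag_isolated_idempotent ff pf Vf.
have [I [idI [Ie Id] maxI]] := maximal_eB_disjoint_diag.
have [D [pi piI]] : exists (D : comPzRingType) (pi : epB K -> D), quotient_of I pi.
  by apply: epB_quotient_exists => // /Ie; exact/eqP/oner_neq0.
exists I; split => //; exists D, pi; split => //.
exact: (essential_of_maximal pi (conj Ie Id) maxI piI diagf).
Qed.

End Epof.

Theorem mainTheorem9 (A : comPzRingType) (Apos : A -> Prop)
  (K : Spec A -> rcfType) (phi : forall q : Spec A, {rmorphism A -> K q})
  (p : Spec A) (e : epB K) :
  poring_cone Apos -> real_ring A -> baer_ring A -> vN_regular A ->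
  is_epof Apos phi ->
  (forall q, q <> p -> e q = 1) -> e p = 0 ->
  isolated_point p <->
  exists I : epB K -> Prop,
    [/\ is_ideal_B I,
        (forall x, I x -> exists y, x = epB_mul e y) &
        exists (D : comPzRingType) (pi : epB K -> D),
          quotient_of I pi /\ essential_ext (fun a => pi (diag phi a))].
Proof.
move=> _ _ _ regA epof e1 e0.
have kerphi q a : phi q a = 0 <-> sval q a by case: (epof q).
split=> [/(essential_quotient_of_isolated regA kerphi e1 e0) [I [idI Ie quoI]]|].
  by exists I; split => // x /Ie /(eB_mem e1 e0).
case=> I [idI Ie [D [pi [piI ess]]]].
apply: (isolated_of_essential_quotient regA kerphi e1 e0 pi idI _ piI ess).
by move=> x /Ie /(eB_mem e1 e0).
Qed.
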